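(* Let $f:(0,\infty)\to\mathbb R$ be convex with $f(1)=0$, and let $\bar f(x):=\sup_{t>0}\{tx-f(t)\}$, $x\in\mathbb R$, be its convex conjugate. Let $\rho>1$, $n\ge2$, $\mathcal A_n=\{1,\dots,n\}$, and $u_f(n,\rho):=\max_{Q\in\mathcal P_n(\rho)}D_f(Q\|U_n)$. Then: (a) for every $P\in\mathcal P_n(\rho)$, $X\sim P$, and every $g:\mathcal A_n\to\mathbb R$: $\mathbb E[g(X)]\le u_f(n,\rho)+\frac1n\sum_{i=1}^n\bar f(g(i))$; (b) there exists $P\in\mathcal P_n(\rho)$ such that for every $\varepsilon>0$ there is $g_\varepsilon:\mathcal A_n\to\mathbb R$ with $\mathbb E[g_\varepsilon(X)]\ge u_f(n,\rho)+\frac1n\sum_{i=1}^n\bar f(g_\varepsilon(i))-\varepsilon$, where $X\sim P$.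
   Context: $\mathcal P_n(\rho)$: probability mass functions on $\mathcal A_n$ with all masses positive and max/min mass ratio at most $\rho$; $U_n$ uniform on $\mathcal A_n$; $D_f(P\|Q)=\sum_xQ(x)f(P(x)/Q(x))$ (conventions $0f(0/0)=0$, $f(0)=\lim_{t\to0^+}f(t)$). *)

From Stdlib Require Import Reals Lra ClassicalEpsilon.
Open Scope R_scope.

(* Finite sum F 0 + ... + F (n-1); index i (0-based) stands for letter i+1 of A_n. *)
Fixpoint rsum (n : nat) (F : nat -> R) : R :=
  match n with O => 0 | S k => rsum k F + F k end.

(* f is convex on (0, oo); values of f outside (0,oo) are irrelevant. *)
Definition convex_pos (f : R -> R) : Prop :=
  forall x y l, 0 < x -> 0 < y -> 0 <= l <= 1 ->
    f (l * x + (1 - l) * y) <= l * f x + (1 - l) * f y.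

Definition in_Pn (n : nat) (rho : R) (P : nat -> R) : Prop :=
  (forall i, (i < n)%nat -> 0 < P i) /\
  rsum n P = 1 /\
  (forall i j, (i < n)%nat -> (j < n)%nat -> P i <= rho * P j).

(* D_f(Q || U_n) = sum_x (1/n) f(Q(x) / (1/n)); all masses positive so no conventions needed. *)
Definition Df_unif (f : R -> R) (n : nat) (Q : nat -> R) : R :=
  rsum n (fun i => / INR n * f (Q i / / INR n)).

Definition expect (n : nat) (P g : nat -> R) : R := rsum n (fun i => P i * g i).

Definition is_uf (f : R -> R) (n : nat) (rho u : R) : Prop :=
  (exists Q, in_Pn n rho Q /\ Df_unif f n Q = u) /\
  (forall Q, in_Pn n rho Q -> Df_unif f n Q <= u).

(* Convex conjugate fbar(x) = sup_{t>0} (t x - f t), a value in R ∪ {+oo}. *)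
Definition conj_set (f : R -> R) (x : R) : R -> Prop :=
  fun y => exists t, 0 < t /\ y = t * x - f t.

Definition conj_finite (f : R -> R) (x : R) : Prop := bound (conj_set f x).

Lemma conj_set_ne (f : R -> R) (x : R) : exists y, conj_set f x y.
Proof. exists (1 * x - f 1). exists 1. split; [lra | reflexivity]. Qed.

(* the real value of fbar(x) when it is finite (junk value 0 when fbar(x) = +oo) *)
Definition fconj (f : R -> R) (x : R) : R :=
  match excluded_middle_informative (conj_finite f x) with
  | left H => proj1_sig (completeness (conj_set f x) H (conj_set_ne f x))
  | right _ => 0
  end.

From Stdlib Require Import Reals Lra Psatz ClassicalEpsilon.
Open Scope R_scope.

(* Write t_i := n P(i), so that E[g(X)] = D_f(P||U_n) + (1/n) sum_i (t_i g(i) - f(t_i)).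
   (a) Fenchel-Young, t x - f t <= fbar x, bounds each summand of the last sum, and
   D_f(P||U_n) <= u_f(n,rho) by definition of u_f.
   (b) Take P := Q a maximiser of D_f(.||U_n) and g(i) a subgradient of f at t_i = n Q(i);
   then t_i is a maximiser in the definition of fbar(g(i)), so Fenchel-Young is an equality
   and the bound is attained exactly, for every eps. *)

Lemma rsum_ext n F G : (forall i, (i < n)%nat -> F i = G i) -> rsum n F = rsum n G.
Proof.
  induction n as [|n IH]; simpl; intros H; [reflexivity|].
  rewrite IH, H; [reflexivity | lia | intros; apply H; lia].
Qed.

Lemma rsum_le n F G : (forall i, (i < n)%nat -> F i <= G i) -> rsum n F <= rsum n G.
Proof.
  induction n as [|n IH]; simpl; intros H; [lra|].
  apply Rplus_le_compat; [apply IH; intros; apply H; lia | apply H; lia].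
Qed.

Lemma rsum_plus n F G : rsum n (fun i => F i + G i) = rsum n F + rsum n G.
Proof. induction n as [|n IH]; simpl; [lra|]. rewrite IH; ring. Qed.

Lemma rsum_scal n c F : rsum n (fun i => c * F i) = c * rsum n F.
Proof. induction n as [|n IH]; simpl; [ring|]. rewrite IH; ring. Qed.

Lemma convex_pos_slope_le f a b c : convex_pos f -> 0 < a -> a < b -> b < c ->
  (f b - f a) / (b - a) <= (f c - f b) / (c - b).
Proof.
  intros Hf Ha Hab Hbc.
  set (l := (c - b) / (c - a)).
  assert (Hl : 0 <= l <= 1).
  { unfold l; split; [apply Rmult_le_pos; [lra | left; apply Rinv_0_lt_compat; lra]|].
    apply Rmult_le_reg_r with (c - a); [lra|]. field_simplify; lra. }
  assert (Hb : l * a + (1 - l) * c = b) by (unfold l; field; lra).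
  assert (Hcvx := Hf a c l Ha ltac:(lra) Hl); rewrite Hb in Hcvx.
  assert (Hmid : (c - a) * f b <= (c - b) * f a + (b - a) * f c).
  { replace ((c - b) * f a + (b - a) * f c) with ((c - a) * (l * f a + (1 - l) * f c))
      by (unfold l; field; lra).
    apply Rmult_le_compat_l; lra. }
  unfold Rdiv; apply Rmult_le_reg_r with ((b - a) * (c - b)); [nra|].
  field_simplify; [nra | lra | lra].
Qed.

(* The subgradient is the supremum of the slopes of chords ending at t0 from the left. *)
Lemma convex_pos_subgradient f t0 : convex_pos f -> 0 < t0 ->
  exists s, forall t, 0 < t -> f t0 + s * (t - t0) <= f t.
Proof.
  intros Hf Ht0.
  set (slopes := fun y => exists r, 0 < r < t0 /\ y = (f t0 - f r) / (t0 - r)).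
  assert (Hbound : bound slopes).
  { exists ((f (t0 + 1) - f t0) / (t0 + 1 - t0)); intros y [r [Hr ->]].
    apply convex_pos_slope_le; auto; lra. }
  assert (Hne : exists y, slopes y) by (exists ((f t0 - f (t0 / 2)) / (t0 - t0 / 2));
    exists (t0 / 2); split; [lra | reflexivity]).
  destruct (completeness slopes Hbound Hne) as [s [Hub Hlub]].
  exists s; intros t Ht.
  destruct (Rtotal_order t t0) as [Hlt | [-> | Hgt]]; [| lra |].
  - assert (Hle : (f t0 - f t) / (t0 - t) <= s) by (apply Hub; exists t; split; [lra | reflexivity]).
    apply Rmult_le_compat_r with (r := t0 - t) in Hle; [|lra].
    unfold Rdiv in Hle; rewrite Rmult_assoc, Rinv_l, Rmult_1_r in Hle; lra.
  - assert (Hle : s <= (f t - f t0) / (t - t0)).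
    { apply Hlub; intros y [r [Hr ->]]; apply convex_pos_slope_le; auto; lra. }
    apply Rmult_le_compat_r with (r := t - t0) in Hle; [|lra].
    unfold Rdiv in Hle; rewrite Rmult_assoc, Rinv_l, Rmult_1_r in Hle; lra.
Qed.

Lemma fconj_is_lub f x : conj_finite f x -> is_lub (conj_set f x) (fconj f x).
Proof.
  intros Hfin; unfold fconj.
  destruct (excluded_middle_informative (conj_finite f x)) as [H | H]; [|contradiction].
  exact (proj2_sig (completeness _ H (conj_set_ne f x))).
Qed.

Lemma fenchel_young f x t : conj_finite f x -> 0 < t -> t * x <= f t + fconj f x.
Proof.
  intros Hfin Ht.
  assert (Hle : t * x - f t <= fconj f x) by (apply (fconj_is_lub f x Hfin); exists t; auto).
  lra.
Qed.

Lemma fconj_subgradient f t0 s : 0 < t0 ->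
  (forall t, 0 < t -> f t0 + s * (t - t0) <= f t) ->
  conj_finite f s /\ fconj f s = t0 * s - f t0.
Proof.
  intros Ht0 Hsub.
  assert (Hub : is_upper_bound (conj_set f s) (t0 * s - f t0)).
  { intros y [t [Ht ->]]; specialize (Hsub t Ht); lra. }
  assert (Hfin : conj_finite f s) by (exists (t0 * s - f t0); exact Hub).
  split; [exact Hfin|].
  destruct (fconj_is_lub f s Hfin) as [Hub' Hlub].
  apply Rle_antisym; [apply Hlub, Hub | apply Hub'; exists t0; auto].
Qed.

Lemma expect_Df_unif_split f n P g : (0 < n)%nat ->
  expect n P g = Df_unif f n P +
    / INR n * rsum n (fun i => P i / / INR n * g i - f (P i / / INR n)).
Proof.
  intros Hn; assert (Hn' : 0 < INR n) by (apply lt_0_INR; exact Hn).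
  unfold Df_unif, expect; rewrite <- rsum_scal, <- rsum_plus.
  apply rsum_ext; intros i _; field; lra.
Qed.

Theorem theorem10 (f : R -> R) (rho : R) (n : nat) (u : R) :
  convex_pos f -> f 1 = 0 -> 1 < rho -> (2 <= n)%nat ->
  is_uf f n rho u ->
  (forall P g, in_Pn n rho P ->
     (forall i, (i < n)%nat -> conj_finite f (g i)) ->
     expect n P g <= u + / INR n * rsum n (fun i => fconj f (g i))) /\
  (exists P, in_Pn n rho P /\
     forall eps, 0 < eps ->
       exists g, (forall i, (i < n)%nat -> conj_finite f (g i)) /\
         expect n P g >= u + / INR n * rsum n (fun i => fconj f (g i)) - eps).
Proof.
  intros Hf _ _ Hn [[Q [HQ HDQ]] Hmax].
  assert (Hn0 : (0 < n)%nat) by lia.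
  assert (Hinv : 0 < / INR n) by (apply Rinv_0_lt_compat, lt_0_INR; exact Hn0).
  assert (Hscaled : forall P i, in_Pn n rho P -> (i < n)%nat -> 0 < P i / / INR n)
    by (intros P i [Hpos _] Hi; apply Rdiv_lt_0_compat; auto).
  split.
  - intros P g HP Hg; rewrite (expect_Df_unif_split f n P g Hn0).
    apply Rplus_le_compat; [exact (Hmax P HP)|].
    apply Rmult_le_compat_l; [lra|]; apply rsum_le; intros i Hi.
    pose proof (fenchel_young f (g i) _ (Hg i Hi) (Hscaled P i HP Hi)); lra.
  - exists Q; split; [exact HQ|]; intros eps Heps.
    destruct (choice (fun i s => (i < n)%nat -> forall t, 0 < t ->
                        f (Q i / / INR n) + s * (t - Q i / / INR n) <= f t)) as [g Hg].
    { intros i; destruct (Nat.lt_ge_cases i n) as [Hi | Hi]; [|exists 0; lia].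
      destruct (convex_pos_subgradient f _ Hf (Hscaled Q i HQ Hi)) as [s Hs].
      exists s; intros _; exact Hs. }
    pose proof (fun i Hi => fconj_subgradient f _ (g i) (Hscaled Q i HQ Hi) (Hg i Hi)) as Hconj.
    exists g; split; [intros i Hi; apply Hconj, Hi|].
    rewrite (expect_Df_unif_split f n Q g Hn0), HDQ.
    rewrite (rsum_ext n (fun i => fconj f (g i))
               (fun i => Q i / / INR n * g i - f (Q i / / INR n)))
      by (intros i Hi; apply Hconj, Hi).
    lra.
Qed.
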